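(* For $t\in(0,1)$ put $c_t:=\frac{4}{4t-t^3}$ and $$K_t(z,P):=\frac{z-\tilde Z(P)}{\bar z-Z(P)}\,e^{-c_t\cosh\mathrm{dist}(z,P)},\qquad z\in\mathbb H,\ P\in\mathcal G_1.$$ Then: (1) $\Phi_t(z,P)=\log K_t(z,P)$ admits a single-valued (continuous) branch for $z\in\mathbb H$, $P\in\mathcal G_1$; (2) for fixed $z\in\mathbb H$ and $\theta\in\mathbb R/2\pi\mathbb Z$, $\max_{P\in\Sigma_{t,\theta}}|K_t(z,P)|$ is attained at $P=h_{-it}(z,\theta)$; (3) for fixed $z_0\in\mathbb H$ and $\theta$, the Hessian matrix with respect to $(x,y)$ of $(x,y)\mapsto\Re\Phi_t(z_0,h_{-it}(x+iy,\theta))$ is non-degenerate at $x+iy=z_0$.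
   Context: $\mathbb H=\{x+iy:y>0\}$ hyperbolic plane; $\mathbb H^{\mathbb C}=\mathbb C\times\mathbb C\ni P=(X(P),Y(P))$, $\mathbb H$ embedded as real points $(x,y)$, $y>0$; $Z(P):=X(P)+iY(P)$, $\tilde Z(P):=X(P)-iY(P)$. For $z=x+iy\in\mathbb H$ and $P$ with $Y(P)\ne0$, $\cosh\mathrm{dist}(z,P):=1+\frac{(x-X(P))^2+(y-Y(P))^2}{2yY(P)}$ (holomorphic in $P$). Horocycles: for $z=x+iy\in\mathbb H$, $\theta\in\mathbb R/2\pi\mathbb Z$, $h_t(z,\theta)$ ($t$ real) is the point at time $t$ of the unique unit-speed right horocycle (image of $t\mapsto -t+i$ under an orientation-preserving isometry) starting at $z$ with velocity $y(\cos\theta\partial_x+\sin\theta\partial_y)$, written as $(\Re,\Im)\in\mathbb R^2$; it extends holomorphically in $t$ to $|\Im t|<1$ with values in $\mathbb C^2$. $\mathcal G_1:=\{h_{-is}(z,\theta): s\in[0,1),z\in\mathbb H,\theta\}$ (an open neighbourhood of $\mathbb H$ in $\mathbb C^2$), and $\Sigma_{t,\theta}:=\{h_{-it}(z,\theta):z\in\mathbb H\}$. *)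

From Stdlib Require Import Reals.
From Coquelicot Require Import Coquelicot.
Open Scope R_scope.

Definition Cexp (w : C) : C :=
  (exp (Re w) * cos (Im w), exp (Re w) * sin (Im w)).

Definition inH (z : C) : Prop := 0 < Im z.

(** points of H^C = C x C: P = (X(P), Y(P)) *)
Definition XP (P : C * C) : C := fst P.
Definition YP (P : C * C) : C := snd P.
Definition ZP (P : C * C) : C := (XP P + Ci * YP P)%C.
Definition ZtP (P : C * C) : C := (XP P - Ci * YP P)%C.

(** cosh dist(z,P) = 1 + ((x - X)^2 + (y - Y)^2) / (2 y Y), holomorphic in P *)
Definition cosh_dist (z : C) (P : C * C) : C :=
  (RtoC 1 + ((RtoC (Re z) - XP P) * (RtoC (Re z) - XP P)
            + (RtoC (Im z) - YP P) * (RtoC (Im z) - YP P))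
           / (RtoC 2 * RtoC (Im z) * YP P))%C.

(** The rotation k_phi about i (a Mobius map with real
    coefficients) with phi = (theta - pi)/2 sends the unit tangent vector
    -d/dx at i to e^{i theta}; the orientation-preserving isometry
    w |-> x + y k_phi(w) sends i to z = x+iy and -d/dx at i to
    y (cos theta d/dx + sin theta d/dy).  Hence the unit speed right
    horocycle starting at z with that velocity is
       t |-> hw z theta t := x + y k_phi(-t + i)   (t real). *)
Definition kphi (theta : R) (w : C) : C :=
  let phi := (theta - PI) / 2 in
  ((RtoC (cos phi) * w + RtoC (sin phi)) / (RtoC (- sin phi) * w + RtoC (cos phi)))%C.

Definition hw (z : C) (theta : R) (t : C) : C :=
  (RtoC (Re z) + RtoC (Im z) * kphi theta (Ci - t))%C.

(** h_t(z,theta) = (Re hw, Im hw) for real t; its holomorphic extension to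
    complex t with |Im t| < 1 is
      X = (hw t + conj (hw (conj t)))/2,  Y = (hw t - conj (hw (conj t)))/(2i). *)
Definition horo (t : C) (z : C) (theta : R) : C * C :=
  (((hw z theta t + Cconj (hw z theta (Cconj t))) / RtoC 2)%C,
   ((hw z theta t - Cconj (hw z theta (Cconj t))) / (RtoC 2 * Ci))%C).

Definition G1 (P : C * C) : Prop :=
  exists (s : R) (z : C) (theta : R),
    0 <= s < 1 /\ inH z /\ P = horo (RtoC 0 - Ci * RtoC s)%C z theta.

Definition Sigma (t theta : R) (P : C * C) : Prop :=
  exists z : C, inH z /\ P = horo (RtoC 0 - Ci * RtoC t)%C z theta.

Definition c_ (t : R) : R := 4 / (4 * t - t ^ 3).

Definition Kt (t : R) (z : C) (P : C * C) : C :=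
  ((z - ZtP P) / (Cconj z - ZP P) * Cexp (RtoC (- c_ t) * cosh_dist z P))%C.

Definition dx (f : R -> R -> R) (x y : R) : R := Derive (fun u => f u y) x.
Definition dy (f : R -> R -> R) (x y : R) : R := Derive (fun v => f x v) y.

Definition hessian_nondegenerate (f : R -> R -> R) (x0 y0 : R) : Prop :=
  (exists eps : R, 0 < eps /\ forall u v, Rabs (u - x0) < eps -> Rabs (v - y0) < eps ->
     ex_derive (fun a => f a v) u /\ ex_derive (fun b => f u b) v) /\
  ex_derive (fun a => dx f a y0) x0 /\ ex_derive (fun b => dx f x0 b) y0 /\
  ex_derive (fun a => dy f a y0) x0 /\ ex_derive (fun b => dy f x0 b) y0 /\
  Derive (fun a => dx f a y0) x0 * Derive (fun b => dy f x0 b) y0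
  - Derive (fun b => dx f x0 b) y0 * Derive (fun a => dy f a y0) x0 <> 0.

From Stdlib Require Import Reals Lra Psatz List.
From Coquelicot Require Import Coquelicot.
Import ListNotations.
Open Scope R_scope.

(* On G_1 one has Im (z - Z~(P)) > 0 and Im (conj z - Z(P)) < 0, so the argument of
   (z - Z~(P)) / (conj z - Z(P)) is given by arctangents of real quotients, which yields a
   continuous branch Phi_t of log K_t.  On Sigma_{t,theta} the problem is invariant under the
   isometries of H: writing z in the horocycle frame at w as xi + i eta, Re Phi_t(z, h_{-it}(w,theta))
   is a constant plus a fixed function of (xi, eta), maximal at (0, 1), i.e. at w = z.  That
   maximality reduces, through third-order-sharp bounds on ln, to two polynomial inequalities,
   settled by Bernstein certificates.  Finally the Hessian at w = z is, up to a rotation,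
   diag(a, b) / (Im z)^2 with a, b < 0 the second derivatives of that function at (0, 1). *)

(** * Bernstein certificates and the maximum of the reduced kernel *)

Fixpoint bernstein_sum (n k : nat) (cs : list R) (x : R) : R :=
  match cs with
  | [] => 0
  | c :: cs => c * (x ^ k * (1 - x) ^ (n - k)) + bernstein_sum n (S k) cs x
  end.

Definition bernstein_sum2 (m n : nat) (rows : list (list R)) (x y : R) : R :=
  bernstein_sum m 0 (map (fun r => bernstein_sum n 0 r y) rows) x.

Lemma bernstein_sum_nonneg n k cs x :
  List.Forall (Rle 0) cs -> 0 <= x <= 1 -> 0 <= bernstein_sum n k cs x.
Proof.
  intros Hcs Hx. revert k. induction Hcs as [|c cs Hc _ IH]; intro k; simpl; [lra|].
  apply Rplus_le_le_0_compat; [|apply IH].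
  apply Rmult_le_pos; [exact Hc|]. apply Rmult_le_pos; apply pow_le; lra.
Qed.

Lemma bernstein_sum2_nonneg m n rows x y :
  List.Forall (List.Forall (Rle 0)) rows -> 0 <= x <= 1 -> 0 <= y <= 1 ->
  0 <= bernstein_sum2 m n rows x y.
Proof.
  intros Hrows Hx Hy. apply bernstein_sum_nonneg; [|exact Hx].
  apply Forall_map. apply (Forall_impl _ (fun r Hr => bernstein_sum_nonneg n 0 r y Hr Hy)), Hrows.
Qed.

Ltac bernstein_certificate m n rows x y :=
  match goal with |- 0 <= ?p =>
    replace p with (bernstein_sum2 m n rows x y) by (unfold bernstein_sum2; simpl; ring);
    apply bernstein_sum2_nonneg; [repeat (apply List.Forall_cons || apply List.Forall_nil); lra | lra | lra]
  end.

(* For eta <= 1 and m = (eta-1)^2, with Y = X + m: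
     gap_lo Y = (8+2 tau) (X - eta m)^2 + c_X X + m c_1,
     gap_hi Y = 2 (4-tau) X^3 + (6 (4-tau) m + q1) (X - eta m)^2 + c_X' X + m c_1',
   and the four lemmas below say that the coefficients c_X, c_1, c_X', c_1' are nonnegative. *)
Section Certificates.
Variables tau eta : R.
Hypotheses (Htau : 0 <= tau <= 1) (Heta : 0 <= eta <= 1).

Lemma gap_lo_coeff_X :
  0 <= 2*(8+2*tau)*(eta-1)^2*(1+eta) + (32-16*tau+6*tau^2)*eta - 16*tau.
Proof.
  bernstein_certificate 4%nat 5%nat
    [[16; 96; 208; 224; 128; 32]; [52; 304; 628; 648; 368; 96];
     [60; 342; 660; 636; 360; 102]; [28; 156; 268; 224; 128; 44];
     [4; 22; 28; 12; 8; 6]] tau eta.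
Qed.

Lemma gap_lo_coeff_1 :
  0 <= (8+2*tau)*(eta-1)^2*(1-eta^2) + (32-16*tau+6*tau^2)*eta - 16*tau + 2*tau^2*(4-tau).
Proof.
  bernstein_certificate 3%nat 4%nat
    [[8; 48; 96; 96; 32]; [10; 68; 144; 176; 64]; [4; 30; 66; 114; 46];
     [0; 2; 6; 26; 12]] tau eta.
Qed.

Let m := (eta-1)^2.
Let q1 := eta*(64-24*tau-6*tau^2) + 2*tau*(4-tau).
Let q0 := (4-tau)*((32-16*tau-2*tau^2)*eta^2 + (10*tau^2-8*tau)*eta - (8*tau+2*tau^2)).

Lemma gap_hi_coeff_X :
  0 <= 6*(4-tau)*m^2 + 2*q1*m + q0 + 2*(6*(4-tau)*m + q1)*eta*m.
Proof.
  unfold m, q1, q0.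
  bernstein_certificate 3%nat 5%nat
    [[24; 200; 512; 640; 384; 128]; [50; 406; 928; 1056; 576; 224];
     [24; 232; 464; 472; 216; 120]; [0; 26; 30; 22; 0; 18]] tau eta.
Qed.

Lemma gap_hi_coeff_1 :
  0 <= 2*(4-tau)*m^2 + q1*m + q0 + 2*(4-tau)^2*tau^2 - (6*(4-tau)*m + q1)*eta^2*m.
Proof.
  unfold m, q1, q0.
  bernstein_certificate 4%nat 6%nat
    [[8; 80; 304; 640; 768; 512; 128]; [6; 100; 452; 1184; 1696; 1312; 352];
     [0; 46; 232; 848; 1488; 1328; 376]; [0; 18; 66; 332; 662; 642; 186];
     [0; 4; 12; 68; 132; 126; 36]] tau eta.
Qed.
End Certificates.

Definition gap_lo (tau eta Y : R) : R :=
  (8+2*tau)*Y^2 + ((32-16*tau+6*tau^2)*eta - 16*tau)*Y + 2*tau^2*(4-tau)*(eta-1)^2.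

Definition gap_hi (tau eta Y : R) : R :=
  2*(4-tau)*Y^3 + (eta*(64-24*tau-6*tau^2) + 2*tau*(4-tau))*Y^2
  + (4-tau)*((32-16*tau-2*tau^2)*eta^2 + (10*tau^2-8*tau)*eta - (8*tau+2*tau^2))*Y
  + 2*(4-tau)^2*tau^2*(eta-1)^2.

Lemma gap_lo_nonneg tau eta X : 0 < tau < 1 -> 0 < eta -> 0 <= X -> 0 <= gap_lo tau eta (X + (eta-1)^2).
Proof.
  intros Htau Heta HX. unfold gap_lo.
  set (m := (eta-1)^2). assert (Hm : 0 <= m) by apply pow2_ge_0.
  assert (0 <= 2*tau^2*(4-tau)*m) by (apply Rmult_le_pos; [|exact Hm]; nra).
  destruct (Rle_lt_dec eta 1) as [Hle|Hgt].
  - pose proof (Rmult_le_pos _ _ HX (gap_lo_coeff_X tau eta ltac:(lra) ltac:(lra))) as H1.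
    pose proof (Rmult_le_pos _ _ Hm (gap_lo_coeff_1 tau eta ltac:(lra) ltac:(lra))) as H0.
    assert (0 <= (8+2*tau)*(X - eta*m)^2) by (apply Rmult_le_pos; [lra | apply pow2_ge_0]).
    fold m in H1, H0. lra.
  - assert (0 <= (32-16*tau+6*tau^2)*eta - 16*tau) by nra.
    assert (0 <= (8+2*tau)*(X + m)^2) by (apply Rmult_le_pos; [lra | apply pow2_ge_0]).
    assert (0 <= ((32-16*tau+6*tau^2)*eta - 16*tau) * (X + m)) by (apply Rmult_le_pos; lra).
    lra.
Qed.

Lemma gap_hi_nonneg tau eta X : 0 < tau < 1 -> 0 < eta -> 0 <= X -> 0 <= gap_hi tau eta (X + (eta-1)^2).
Proof.
  intros Htau Heta HX. unfold gap_hi.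
  set (m := (eta-1)^2). assert (Hm : 0 <= m) by apply pow2_ge_0.
  set (q1 := eta*(64-24*tau-6*tau^2) + 2*tau*(4-tau)).
  set (r := (32-16*tau-2*tau^2)*eta^2 + (10*tau^2-8*tau)*eta - (8*tau+2*tau^2)).
  assert (Hq1 : 0 <= q1).
  { assert (0 <= 64-24*tau-6*tau^2) by nra.
    unfold q1; apply Rplus_le_le_0_compat; apply Rmult_le_pos; lra. }
  assert (0 <= 2*(4-tau)^2*tau^2*m).
  { apply Rmult_le_pos; [|exact Hm].
    apply Rmult_le_pos; [apply Rmult_le_pos; [lra|] |]; apply pow2_ge_0. }
  destruct (Rle_lt_dec eta 1) as [Hle|Hgt].
  - pose proof (Rmult_le_pos _ _ HX (gap_hi_coeff_X tau eta ltac:(lra) ltac:(lra))) as H1.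
    pose proof (Rmult_le_pos _ _ Hm (gap_hi_coeff_1 tau eta ltac:(lra) ltac:(lra))) as H0.
    assert (0 <= 2*(4-tau)*X^3) by (apply Rmult_le_pos; [lra | apply pow_le; lra]).
    assert (0 <= (6*(4-tau)*m + q1)*(X - eta*m)^2) by (apply Rmult_le_pos; [nra | apply pow2_ge_0]).
    fold m in H1, H0. fold q1 r in H1, H0. lra.
  - assert (0 <= r).
    { unfold r. set (e := eta - 1). replace eta with (1 + e) by (unfold e; ring).
      assert (0 <= e) by (unfold e; lra).
      assert (0 <= e * (64-40*tau+6*tau^2)) by (apply Rmult_le_pos; nra).
      assert (0 <= e^2 * (32-16*tau-2*tau^2)) by (apply Rmult_le_pos; [apply pow2_ge_0 | nra]).
      nra. }
    assert (HY : 0 <= X + m) by lra.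
    assert (0 <= 2*(4-tau)*(X + m)^3) by (apply Rmult_le_pos; [lra | apply pow_le; lra]).
    assert (0 <= q1*(X + m)^2) by (apply Rmult_le_pos; [lra | apply pow2_ge_0]).
    assert (0 <= (4-tau)*r*(X + m)) by (apply Rmult_le_pos; [apply Rmult_le_pos|]; lra).
    lra.
Qed.

Lemma ln_le_of_le1 y : 0 < y <= 1 -> ln y <= 2*(y-1)/(y+1).
Proof.
  intros Hy. destruct (Req_dec y 1) as [->|Hy1]; [rewrite ln_1; lra|].
  set (phi := fun x => 2*(x-1)/(x+1) - ln x).
  assert (Hphi' : forall c, y <= c <= 1 -> derivable_pt_lim phi c (- ((c-1)^2/(c*(c+1)^2)))).
  { intros c Hc. apply is_derive_Reals. unfold phi. auto_derive; [lra | field; lra]. }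
  destruct (MVT_cor2 phi _ y 1 ltac:(lra) Hphi') as [c [Hc1 Hc2]].
  assert (0 <= (c-1)^2/(c*(c+1)^2)).
  { apply Rdiv_le_0_compat; [apply pow2_ge_0|].
    apply Rmult_lt_0_compat; [lra | apply pow_lt; lra]. }
  unfold phi in Hc1. rewrite ln_1 in Hc1. nra.
Qed.

Lemma ln_le_of_ge1 y : 1 <= y -> ln y <= (y - /y)/2.
Proof.
  intros Hy. destruct (Req_dec y 1) as [->|Hy1]; [rewrite ln_1; lra|].
  set (phi := fun x => (x - /x)/2 - ln x).
  assert (Hphi' : forall c, 1 <= c <= y -> derivable_pt_lim phi c ((c-1)^2/(2*c^2))).
  { intros c Hc. apply is_derive_Reals. unfold phi. auto_derive; [lra | field; lra]. }
  destruct (MVT_cor2 phi _ 1 y ltac:(lra) Hphi') as [c [Hc1 Hc2]].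
  assert (0 <= (c-1)^2/(2*c^2)).
  { apply Rdiv_le_0_compat; [apply pow2_ge_0|]. assert (0 < c^2) by (apply pow_lt; lra). lra. }
  unfold phi in Hc1. rewrite ln_1 in Hc1. nra.
Qed.

(* ln y <= 2 (y-1)/(y+1) for y <= 1 and ln y <= (y - 1/y)/2 for y >= 1 agree with ln to third order
   at y = 1, which is needed since equality holds at X = 0, eta = 1. *)
Lemma half_ln_ratio_le t eta X : 0 < t < 1 -> 0 < eta -> 0 <= X ->
  ln (((X + (eta+1-t)^2) * (2+t)^2) / ((X + (eta+1+t)^2) * (2-t)^2)) / 2
  <= 2*(X + (eta-1)^2 + t^2*(eta-1)) / (eta*t*(4-t^2)).
Proof.
  intros Ht Heta HX.
  assert (H4 : 0 < 4 - t^2) by nra.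
  assert (0 < (eta+1-t)^2) by (apply pow_lt; lra).
  assert (0 < (eta+1+t)^2) by (apply pow_lt; lra).
  set (num := (X + (eta+1-t)^2) * (2+t)^2).
  set (den := (X + (eta+1+t)^2) * (2-t)^2).
  assert (Hnum : 0 < num) by (apply Rmult_lt_0_compat; [lra | apply pow_lt; lra]).
  assert (Hden : 0 < den) by (apply Rmult_lt_0_compat; [lra | apply pow_lt; lra]).
  assert (Hy : 0 < num/den) by (apply Rdiv_lt_0_compat; lra).
  destruct (Rle_lt_dec (num/den) 1) as [Hle|Hgt].
  - pose proof (ln_le_of_le1 _ (conj Hy Hle)).
    pose proof (gap_lo_nonneg (t^2) eta X ltac:(nra) Heta HX).
    assert (Hid : 2*(X + (eta-1)^2 + t^2*(eta-1)) / (eta*t*(4-t^2)) - (num/den-1)/(num/den+1)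
                  = 2 * gap_lo (t^2) eta (X + (eta-1)^2) / (eta*t*(4-t^2)*(num+den))).
    { unfold gap_lo, num, den. field. repeat split; try lra; apply Rgt_not_eq; fold num den; lra. }
    assert (0 <= 2 * gap_lo (t^2) eta (X + (eta-1)^2) / (eta*t*(4-t^2)*(num+den))).
    { apply Rdiv_le_0_compat; [lra|]. repeat apply Rmult_lt_0_compat; lra. }
    lra.
  - pose proof (ln_le_of_ge1 _ (Rlt_le _ _ Hgt)).
    pose proof (gap_hi_nonneg (t^2) eta X ltac:(nra) Heta HX).
    assert (Hid : 2*(X + (eta-1)^2 + t^2*(eta-1)) / (eta*t*(4-t^2)) - (num/den - /(num/den))/4
                  = gap_hi (t^2) eta (X + (eta-1)^2) / (eta*t*num*den)).
    { unfold gap_hi, num, den. field. repeat split; try lra; apply Rgt_not_eq; fold num den; lra. }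
    assert (0 <= gap_hi (t^2) eta (X + (eta-1)^2) / (eta*t*num*den)).
    { apply Rdiv_le_0_compat; [lra|]. repeat apply Rmult_lt_0_compat; lra. }
    lra.
Qed.

(* Re Phi_t in horocycle-frame coordinates, up to an additive constant; see [RePhi_horo]. *)
Definition logK_reduced (t xi eta : R) : R :=
  (ln (xi^2 + (eta+1-t)^2) - ln (xi^2 + (eta+1+t)^2))/2
  - c_ t * (1 + (xi^2 + (eta-1)^2 - t^2)/(2*eta)).

Lemma logK_reduced_le_origin t xi eta : 0 < t < 1 -> 0 < eta ->
  logK_reduced t xi eta <= logK_reduced t 0 1.
Proof.
  intros Ht Heta.
  pose proof (half_ln_ratio_le t eta (xi^2) Ht Heta (pow2_ge_0 xi)) as Hln.
  assert (0 < (eta+1-t)^2) by (apply pow_lt; lra).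
  assert (0 < (eta+1+t)^2) by (apply pow_lt; lra).
  assert (0 < (2-t)^2) by (apply pow_lt; lra).
  assert (0 < (2+t)^2) by (apply pow_lt; lra).
  assert (0 <= xi^2) by apply pow2_ge_0.
  assert (0 < 4*t - t^3) by (replace (4*t - t^3) with (t*(4-t^2)) by ring; apply Rmult_lt_0_compat; nra).
  rewrite ln_div, !ln_mult in Hln by (try apply Rmult_lt_0_compat; lra).
  assert (Hc : c_ t * (1 + (xi^2 + (eta-1)^2 - t^2)/(2*eta)) - c_ t * (1 + (0^2 + (1-1)^2 - t^2)/(2*1))
               = 2*(xi^2 + (eta-1)^2 + t^2*(eta-1)) / (eta*t*(4-t^2))).
  { unfold c_. field. repeat split; nra. }
  unfold logK_reduced.
  replace (0^2 + (1+1-t)^2) with ((2-t)^2) by ring.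
  replace (0^2 + (1+1+t)^2) with ((2+t)^2) by ring.
  lra.
Qed.

(** * Continuity of the branch of the logarithm *)

Section RealContinuity.
Context {T : UniformSpace}.
Implicit Types (f g : T -> R) (x : T).

Lemma continuous_Rplus f g x :
  continuous f x -> continuous g x -> continuous (fun y => f y + g y) x.
Proof. exact (continuous_plus f g x). Qed.

Lemma continuous_Rmult f g x :
  continuous f x -> continuous g x -> continuous (fun y => f y * g y) x.
Proof. exact (@continuous_mult T R_AbsRing f g x). Qed.

Lemma continuous_Ropp f x : continuous f x -> continuous (fun y => - f y) x.
Proof. exact (continuous_opp f x). Qed.

Lemma continuous_Rminus f g x :
  continuous f x -> continuous g x -> continuous (fun y => f y - g y) x.
Proof. intros. apply continuous_Rplus, continuous_Ropp; assumption. Qed.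

Lemma continuous_Rinv_of f x : continuous f x -> f x <> 0 -> continuous (fun y => / f y) x.
Proof. intros Hf Hx. apply (continuous_comp f Rinv); [exact Hf | exact (continuous_Rinv _ Hx)]. Qed.

Lemma continuous_Rdiv f g x :
  continuous f x -> continuous g x -> g x <> 0 -> continuous (fun y => f y / g y) x.
Proof. intros. apply continuous_Rmult, continuous_Rinv_of; assumption. Qed.

Lemma continuous_ln_of f x : continuous f x -> 0 < f x -> continuous (fun y => ln (f y)) x.
Proof. intros Hf Hx. apply (continuous_comp f ln); [exact Hf | exact (continuous_ln _ Hx)]. Qed.

Lemma continuous_atan_of f x : continuous f x -> continuous (fun y => atan (f y)) x.
Proof. intros Hf. apply (continuous_comp f atan); [exact Hf | apply continuous_atan]. Qed.
End RealContinuity.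

Lemma continuous_fst_of {T U V : UniformSpace} (f : T -> U * V) x :
  continuous f x -> continuous (fun y => fst (f y)) x.
Proof. intros Hf. apply (continuous_comp f fst); [exact Hf|]. destruct (f x). apply continuous_fst. Qed.

Lemma continuous_snd_of {T U V : UniformSpace} (f : T -> U * V) x :
  continuous f x -> continuous (fun y => snd (f y)) x.
Proof. intros Hf. apply (continuous_comp f snd); [exact Hf|]. destruct (f x). apply continuous_snd. Qed.

Section ComplexContinuity.
Context {T : UniformSpace}.
Implicit Types (f g : T -> C) (x : T).

Definition ccontinuous f x : Prop :=
  continuous (fun y => fst (f y)) x /\ continuous (fun y => snd (f y)) x.

Lemma ccontinuous_of_continuous f x : continuous f x -> ccontinuous f x.
Proof.
  intros Hf. split;
    [exact (@continuous_fst_of _ R_UniformSpace R_UniformSpace f x Hf)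
    | exact (@continuous_snd_of _ R_UniformSpace R_UniformSpace f x Hf)].
Qed.

Lemma continuous_of_ccontinuous f x : ccontinuous f x -> continuous f x.
Proof.
  intros [H1 H2].
  apply (continuous_ext (fun y => (fst (f y), snd (f y)))); [intro y; now destruct (f y)|].
  apply (continuous_comp_2 (fun y => fst (f y)) (fun y => snd (f y)) (fun a b => (a, b) : C));
    [exact H1 | exact H2|].
  apply (continuous_ext (fun p => p)); [now intros [a b] | apply continuous_id].
Qed.

Lemma ccontinuous_const (c : C) x : ccontinuous (fun _ => c) x.
Proof. split; apply continuous_const. Qed.

Lemma ccontinuous_plus f g x : ccontinuous f x -> ccontinuous g x -> ccontinuous (fun y => f y + g y)%C x.
Proof. intros [] []. split; apply continuous_Rplus; assumption. Qed.

Lemma ccontinuous_opp f x : ccontinuous f x -> ccontinuous (fun y => - f y)%C x.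
Proof. intros []. split; apply continuous_Ropp; assumption. Qed.

Lemma ccontinuous_minus f g x : ccontinuous f x -> ccontinuous g x -> ccontinuous (fun y => f y - g y)%C x.
Proof. intros. apply ccontinuous_plus, ccontinuous_opp; assumption. Qed.

Lemma ccontinuous_mult f g x : ccontinuous f x -> ccontinuous g x -> ccontinuous (fun y => f y * g y)%C x.
Proof.
  intros [] []. split; simpl;
    [apply continuous_Rminus | apply continuous_Rplus]; apply continuous_Rmult; assumption.
Qed.

Lemma ccontinuous_conj f x : ccontinuous f x -> ccontinuous (fun y => Cconj (f y)) x.
Proof. intros []. split; simpl; [|apply continuous_Ropp]; assumption. Qed.

Lemma ccontinuous_inv f x : ccontinuous f x -> f x <> 0%C -> ccontinuous (fun y => / f y)%C x.
Proof.
  intros [H1 H2] Hx.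
  assert (Hn : fst (f x) ^ 2 + snd (f x) ^ 2 <> 0).
  { intro E. apply Hx. destruct (f x) as [a b]. simpl in E.
    apply injective_projections; simpl; nra. }
  assert (Hc : continuous (fun y => fst (f y) ^ 2 + snd (f y) ^ 2) x).
  { simpl. apply continuous_Rplus; repeat apply continuous_Rmult; auto; apply continuous_const. }
  split; simpl; apply continuous_Rdiv; auto. apply continuous_Ropp; auto.
Qed.

Lemma ccontinuous_div f g x :
  ccontinuous f x -> ccontinuous g x -> g x <> 0%C -> ccontinuous (fun y => f y / g y)%C x.
Proof. intros. apply ccontinuous_mult, ccontinuous_inv; assumption. Qed.
End ComplexContinuity.

(* For Im a > 0 > Im b: arg a = pi/2 - atan (Re a / Im a), arg b = - pi/2 - atan (Re b / Im b). *)
Definition log_branch (a b w : C) : C :=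
  ((ln (fst a ^ 2 + snd a ^ 2) - ln (fst b ^ 2 + snd b ^ 2)) / 2 + fst w,
   PI - atan (fst a / snd a) + atan (fst b / snd b) + snd w).

Lemma Cexp_log_branch (a b w : C) : 0 < snd a -> snd b < 0 ->
  Cexp (log_branch a b w) = (a / b * Cexp w)%C.
Proof.
  destruct a as [a1 a2], b as [b1 b2], w as [w1 w2]. unfold log_branch. cbn [fst snd]. intros Ha Hb.
  set (qa := a1^2 + a2^2). set (qb := b1^2 + b2^2).
  assert (Hqa : 0 < qa) by (unfold qa; nra).
  assert (Hqb : 0 < qb) by (unfold qb; nra).
  set (sa := sqrt qa). set (sb := sqrt qb).
  assert (Hsa : 0 < sa) by (apply sqrt_lt_R0; lra).
  assert (Hsb : 0 < sb) by (apply sqrt_lt_R0; lra).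
  assert (Hsb2 : sb * sb = b1^2 + b2^2) by (unfold sb; rewrite sqrt_sqrt; [reflexivity | lra]).
  assert (Hexp : exp ((ln qa - ln qb) / 2 + w1) = sa / sb * exp w1).
  { unfold sa, sb. rewrite <- !Rpower_sqrt by lra. unfold Rpower.
    replace ((ln qa - ln qb) / 2 + w1) with (/2 * ln qa + (- (/2 * ln qb) + w1)) by field.
    rewrite !exp_plus, exp_Ropp. field. apply Rgt_not_eq, exp_pos. }
  assert (Ea : sqrt (1 + (a1/a2)²) = sa / a2).
  { replace (1 + (a1/a2)²) with (qa / a2²) by (unfold qa, Rsqr; field; lra).
    rewrite sqrt_div_alt by (unfold Rsqr; nra). rewrite sqrt_Rsqr by lra. reflexivity. }
  assert (Eb : sqrt (1 + (b1/b2)²) = sb / (- b2)).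
  { replace (1 + (b1/b2)²) with (qb / b2²) by (unfold qb, Rsqr; field; lra).
    rewrite sqrt_div_alt by (unfold Rsqr; nra). rewrite sqrt_Rsqr_abs, Rabs_left by lra. reflexivity. }
  unfold Cexp, Re, Im. cbn [fst snd]. rewrite Hexp.
  repeat rewrite ?cos_plus, ?sin_plus, ?cos_minus, ?sin_minus. rewrite cos_PI, sin_PI.
  rewrite !sin_atan, !cos_atan, Ea, Eb.
  apply injective_projections; simpl;
    replace (b1*(b1*1) + b2*(b2*1)) with (sb*sb) by (rewrite Hsb2; ring);
    field; repeat split; lra.
Qed.

Lemma ccontinuous_log_branch {T : UniformSpace} (fa fb fw : T -> C) x :
  ccontinuous fa x -> ccontinuous fb x -> ccontinuous fw x ->
  0 < snd (fa x) -> snd (fb x) < 0 ->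
  ccontinuous (fun y => log_branch (fa y) (fb y) (fw y)) x.
Proof.
  intros [Ha1 Ha2] [Hb1 Hb2] [Hw1 Hw2] Ha Hb.
  assert (Hsq : forall g : T -> R, continuous g x -> continuous (fun y => g y ^ 2) x).
  { intros g Hg. simpl. repeat apply continuous_Rmult; auto. apply continuous_const. }
  split; unfold log_branch; cbn [fst snd].
  - apply continuous_Rplus; [|exact Hw1].
    apply continuous_Rdiv; [| apply continuous_const | lra].
    assert (0 < snd (fa x) ^ 2) by (apply pow_lt; lra).
    assert (0 < snd (fb x) ^ 2) by nra.
    assert (0 <= fst (fa x) ^ 2) by apply pow2_ge_0.
    assert (0 <= fst (fb x) ^ 2) by apply pow2_ge_0.
    apply continuous_Rminus; apply continuous_ln_of;
      try (apply continuous_Rplus; apply Hsq; assumption); lra.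
  - apply continuous_Rplus; [|exact Hw2].
    apply continuous_Rplus; [apply continuous_Rminus; [apply continuous_const|] |];
      apply continuous_atan_of, continuous_Rdiv; auto; lra.
Qed.

Definition Phi (t : R) (z : C) (P : C * C) : C :=
  log_branch (z - ZtP P) (Cconj z - ZP P) (RtoC (- c_ t) * cosh_dist z P).

Lemma Cexp_Phi t z P : 0 < snd (z - ZtP P)%C -> snd (Cconj z - ZP P)%C < 0 ->
  Cexp (Phi t z P) = Kt t z P.
Proof. exact (Cexp_log_branch _ _ _). Qed.

Section PhiContinuity.
Notation Q := (prod_UniformSpace C_UniformSpace (prod_UniformSpace C_UniformSpace C_UniformSpace)).
Variable q0 : Q.

Lemma continuous_z : continuous (fun q : Q => fst q) q0.
Proof. exact (continuous_fst_of (fun q => q) q0 (continuous_id q0)). Qed.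

Lemma continuous_P : continuous (fun q : Q => snd q) q0.
Proof. exact (continuous_snd_of (fun q => q) q0 (continuous_id q0)). Qed.

Lemma ccontinuous_z : ccontinuous (fun q : Q => fst q) q0.
Proof. exact (ccontinuous_of_continuous _ _ continuous_z). Qed.

Lemma ccontinuous_XP : ccontinuous (fun q : Q => XP (snd q)) q0.
Proof.
  apply ccontinuous_of_continuous.
  exact (@continuous_fst_of _ C_UniformSpace C_UniformSpace _ _ continuous_P).
Qed.

Lemma ccontinuous_YP : ccontinuous (fun q : Q => YP (snd q)) q0.
Proof.
  apply ccontinuous_of_continuous.
  exact (@continuous_snd_of _ C_UniformSpace C_UniformSpace _ _ continuous_P).
Qed.

Lemma ccontinuous_Re_z : ccontinuous (fun q : Q => RtoC (Re (fst q))) q0.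
Proof. split; [apply ccontinuous_z | apply continuous_const]. Qed.

Lemma ccontinuous_Im_z : ccontinuous (fun q : Q => RtoC (Im (fst q))) q0.
Proof. split; [apply ccontinuous_z | apply continuous_const]. Qed.

Ltac ccontinuity := repeat match goal with
  | |- ccontinuous (fun q => (@?f q + @?g q)%C) _ => apply (ccontinuous_plus f g)
  | |- ccontinuous (fun q => (@?f q - @?g q)%C) _ => apply (ccontinuous_minus f g)
  | |- ccontinuous (fun q => (@?f q * @?g q)%C) _ => apply (ccontinuous_mult f g)
  | |- ccontinuous (fun q => Cconj (@?f q)) _ => apply (ccontinuous_conj f)
  | |- ccontinuous (fun q => fst q) _ => apply ccontinuous_z
  | |- ccontinuous (fun q => XP (snd q)) _ => apply ccontinuous_XP
  | |- ccontinuous (fun q => YP (snd q)) _ => apply ccontinuous_YP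
  | |- ccontinuous (fun q => RtoC (Re (fst q))) _ => apply ccontinuous_Re_z
  | |- ccontinuous (fun q => RtoC (Im (fst q))) _ => apply ccontinuous_Im_z
  | |- ccontinuous (fun _ => ?c) _ => apply (ccontinuous_const c)
  end.

Lemma ccontinuous_cosh_dist : Im (fst q0) <> 0 -> fst (YP (snd q0)) <> 0 ->
  ccontinuous (fun q : Q => cosh_dist (fst q) (snd q)) q0.
Proof.
  intros Hz HY. unfold cosh_dist. ccontinuity.
  apply (ccontinuous_div (fun q : Q => _) (fun q : Q => _)); ccontinuity.
  intro E. apply (f_equal fst) in E. simpl in E.
  ring_simplify in E.
  apply Rmult_integral in E as [E|E]; [apply Rmult_integral in E as [E|E]; [lra|] |]; contradiction.
Qed.

Lemma continuous_Phi t : Im (fst q0) <> 0 -> fst (YP (snd q0)) <> 0 ->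
  0 < snd (fst q0 - ZtP (snd q0))%C -> snd (Cconj (fst q0) - ZP (snd q0))%C < 0 ->
  continuous (fun q : Q => Phi t (fst q) (snd q)) q0.
Proof.
  intros Hz HY Ha Hb. apply continuous_of_ccontinuous. unfold Phi.
  apply ccontinuous_log_branch; auto; unfold ZtP, ZP; ccontinuity.
  apply ccontinuous_cosh_dist; assumption.
Qed.
End PhiContinuity.

(** * Horocycle frames *)

Definition cphi (th : R) : R := cos ((th - PI) / 2).
Definition sphi (th : R) : R := sin ((th - PI) / 2).

Lemma cphi_sphi th : cphi th * cphi th + sphi th * sphi th = 1.
Proof. pose proof (sin2_cos2 ((th - PI) / 2)) as H. unfold Rsqr in H. unfold cphi, sphi. lra. Qed.

Definition kden (th T : R) : R := cphi th * cphi th + sphi th * sphi th * (T * T).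
Definition kre (th T : R) : R := sphi th * cphi th * (1 - T*T) / kden th T.
Definition kim (th T : R) : R := T * (cphi th * cphi th + sphi th * sphi th) / kden th T.

Lemma kden_pos th T : 0 < T -> 0 < kden th T.
Proof.
  intros HT. pose proof (cphi_sphi th). unfold kden.
  destruct (Rle_dec 1 T).
  - assert (0 <= sphi th * sphi th * (T*T-1)) by (apply Rmult_le_pos; nra). nra.
  - assert (0 <= cphi th * cphi th * (1-T*T)) by (apply Rmult_le_pos; nra). nra.
Qed.

Lemma kim_pos th T : 0 < T -> 0 < kim th T.
Proof.
  intros HT. pose proof (kden_pos th T HT). unfold kim. rewrite cphi_sphi.
  apply Rdiv_lt_0_compat; lra.
Qed.

Lemma kphi_imag th T : 0 < T -> kphi th (0, T) = (kre th T, kim th T).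
Proof.
  intros HT. pose proof (kden_pos th T HT). unfold kphi, kre, kim, kden in *.
  fold (cphi th) (sphi th).
  apply injective_projections; simpl; field; lra.
Qed.

Lemma horo_imag_time (s : R) (w : C) th : 0 <= s < 1 ->
  horo (RtoC 0 - Ci * RtoC s)%C w th =
  (((fst w + snd w * kre th (1+s) + (fst w + snd w * kre th (1-s)))/2,
    (snd w * kim th (1+s) - snd w * kim th (1-s))/2),
   ((snd w * kim th (1+s) + snd w * kim th (1-s))/2,
    -(snd w * kre th (1+s) - snd w * kre th (1-s))/2)).
Proof.
  intros Hs. unfold horo, hw.
  replace (Ci - (RtoC 0 - Ci * RtoC s))%C with ((0, 1 + s) : C)
    by (apply injective_projections; simpl; ring).
  replace (Ci - Cconj (RtoC 0 - Ci * RtoC s))%C with ((0, 1 - s) : C)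
    by (apply injective_projections; simpl; ring).
  rewrite !kphi_imag by lra. destruct w as [u v]. unfold Re, Im.
  apply injective_projections; apply injective_projections; simpl; field.
Qed.

(* Z(P) = Re w + Im w k_phi(i(1+s)) and Z~(P) = Re w + Im w conj (k_phi(i(1-s))), where k_phi
   preserves the upper half-plane. *)
Lemma horo_signs s (w z : C) th : 0 <= s < 1 -> 0 < snd z -> 0 < snd w ->
  let P := horo (RtoC 0 - Ci * RtoC s)%C w th in
  0 < snd (z - ZtP P)%C /\ snd (Cconj z - ZP P)%C < 0 /\ 0 < fst (YP P).
Proof.
  intros Hs Hz Hw P. unfold P. rewrite horo_imag_time by assumption.
  unfold ZtP, ZP, XP, YP. simpl.
  pose proof (kim_pos th (1+s) ltac:(lra)). pose proof (kim_pos th (1-s) ltac:(lra)).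
  assert (0 < snd w * kim th (1+s)) by (apply Rmult_lt_0_compat; lra).
  assert (0 < snd w * kim th (1-s)) by (apply Rmult_lt_0_compat; lra).
  repeat split; lra.
Qed.

(* frame_xi + i frame_eta = k_phi^{-1}((z0 - Re w) / Im w). *)
Definition frame_den th (z0 w : C) : R :=
  (sphi th * ((fst z0 - fst w) / snd w) + cphi th)^2 + sphi th * sphi th * ((snd z0 / snd w)^2).
Definition frame_xi th (z0 w : C) : R :=
  let w1 := (fst z0 - fst w) / snd w in let w2 := snd z0 / snd w in
  (cphi th * sphi th * (w1*w1 + w2*w2 - 1) + (cphi th * cphi th - sphi th * sphi th) * w1)
  / frame_den th z0 w.
Definition frame_eta th (z0 w : C) : R :=
  (cphi th * cphi th + sphi th * sphi th) * (snd z0 / snd w) / frame_den th z0 w.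

Definition logK_offset t th : R := (ln (kden th (1+t)) - ln (kden th (1-t))) / 2.

Lemma frame_den_pos th z0 w : 0 < snd z0 -> 0 < snd w -> 0 < frame_den th z0 w.
Proof.
  intros Hz Hw. pose proof (cphi_sphi th). unfold frame_den.
  assert (0 < snd z0 / snd w) by (apply Rdiv_lt_0_compat; lra).
  set (w1 := (fst z0 - fst w) / snd w) in *. set (w2 := snd z0 / snd w) in *.
  destruct (Req_dec (sphi th) 0) as [E|E].
  - rewrite E in *. nra.
  - assert (0 < sphi th * sphi th) by (apply Rsqr_pos_lt in E; unfold Rsqr in E; lra).
    assert (0 < sphi th * sphi th * (w2^2)) by (apply Rmult_lt_0_compat; nra).
    assert (0 <= (sphi th * w1 + cphi th)^2) by apply pow2_ge_0. lra.
Qed.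

Lemma frame_eta_pos th z0 w : 0 < snd z0 -> 0 < snd w -> 0 < frame_eta th z0 w.
Proof.
  intros Hz Hw. pose proof (frame_den_pos th z0 w Hz Hw). unfold frame_eta.
  rewrite cphi_sphi, Rmult_1_l. apply Rdiv_lt_0_compat; [apply Rdiv_lt_0_compat|]; lra.
Qed.

Lemma frame_self th (z0 : C) : 0 < snd z0 -> frame_xi th z0 z0 = 0 /\ frame_eta th z0 z0 = 1.
Proof.
  intros Hz. pose proof (cphi_sphi th).
  assert (E1 : (fst z0 - fst z0) / snd z0 = 0) by (field; lra).
  assert (E2 : snd z0 / snd z0 = 1) by (field; lra).
  assert (Hden : frame_den th z0 z0 = 1) by (unfold frame_den; rewrite E1, E2; lra).
  unfold frame_xi, frame_eta. cbv zeta. rewrite Hden, E1, E2. split; lra.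
Qed.

Lemma sumsq_neq0 (a b : R) : a <> 0 -> a * a + b * b <> 0.
Proof.
  intros H. apply Rgt_not_eq.
  assert (0 < a*a) by (apply Rsqr_pos_lt in H; unfold Rsqr in H; lra). nra.
Qed.

Lemma sumsq_neq0_r (a b : R) : b <> 0 -> a * a + b * b <> 0.
Proof. intros H. rewrite Rplus_comm. apply sumsq_neq0, H. Qed.

Ltac nonzero_side HD1 HD2 HK :=
  first [exact (Rgt_not_eq _ _ HD1) | exact (Rgt_not_eq _ _ HD2) | apply sumsq_neq0; first [exact HK | lra]].

Lemma RePhi_horo t th (z0 w : C) : 0 < t < 1 -> 0 < snd z0 -> 0 < snd w ->
  Re (Phi t z0 (horo (RtoC 0 - Ci * RtoC t)%C w th))
  = logK_offset t th + logK_reduced t (frame_xi th z0 w) (frame_eta th z0 w).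
Proof.
  intros Ht Hz Hw. rewrite horo_imag_time by lra.
  pose proof (frame_den_pos th z0 w Hz Hw) as HD. pose proof (frame_eta_pos th z0 w Hz Hw) as He.
  pose proof (kden_pos th (1+t) ltac:(lra)) as HD1. pose proof (kden_pos th (1-t) ltac:(lra)) as HD2.
  pose proof (cphi_sphi th) as HCS.
  unfold Re, Phi, log_branch, logK_reduced, logK_offset, frame_xi, frame_eta in *. unfold kre, kim.
  cbv zeta in *. unfold frame_den in *.
  destruct z0 as [x0 y0], w as [u v]. cbn [fst snd] in *.
  set (Cc := cphi th) in *. set (Ss := sphi th) in *.
  set (D := (Ss * ((x0 - u) / v) + Cc) ^ 2 + Ss * Ss * ((y0 / v) ^ 2)) in *.
  set (xi := (Cc * Ss * ((x0 - u) / v * ((x0 - u) / v) + y0 / v * (y0 / v) - 1) +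
       (Cc * Cc - Ss * Ss) * ((x0 - u) / v)) / D).
  set (eta := (Cc * Cc + Ss * Ss) * (y0 / v) / D) in *.
  unfold kden in *. fold Cc Ss in HD1, HD2 |- *.
  set (D1 := Cc * Cc + Ss * Ss * ((1 + t) * (1 + t))) in *.
  set (D2 := Cc * Cc + Ss * Ss * ((1 - t) * (1 - t))) in *.
  assert (HvD : (Ss * (x0 - u) + Cc * v) * (Ss * (x0 - u) + Cc * v) + Ss * Ss * (y0 * y0) <> 0).
  { replace ((Ss * (x0 - u) + Cc * v) * (Ss * (x0 - u) + Cc * v) + Ss * Ss * (y0 * y0)) with (v*v*D)
      by (unfold D; field; lra).
    apply Rgt_not_eq. apply Rmult_lt_0_compat; [nra | lra]. }
  assert (HK : y0 * (v * ((1 + t) * (Cc * Cc + Ss * Ss)) * D2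
                     + v * ((1 - t) * (Cc * Cc + Ss * Ss)) * D1) <> 0).
  { apply Rmult_integral_contrapositive_currified; [lra|]. rewrite HCS. apply Rgt_not_eq.
    assert (0 < v * ((1 + t) * 1) * D2)
      by (repeat apply Rmult_lt_0_compat; lra).
    assert (0 < v * ((1 - t) * 1) * D1)
      by (repeat apply Rmult_lt_0_compat; lra).
    lra. }
  match goal with |- context [ln ?A - ln ?B] =>
    assert (HA : A = v^2 * D * (xi^2 + (eta+1-t)^2) / D2);
    [ | assert (HB : B = v^2 * D * (xi^2 + (eta+1+t)^2) / D1)] end.
  { unfold ZtP, XP, YP, xi, eta, D, D1, D2. simpl. field.
    repeat split; try lra; nonzero_side HD1 HD2 HK. }
  { unfold ZP, XP, YP, xi, eta, D, D1, D2. simpl. field.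
    repeat split; try lra; nonzero_side HD1 HD2 HK. }
  match goal with |- context [fst (RtoC (- c_ t) * ?W)%C] =>
    assert (HW : fst (RtoC (- c_ t) * W)%C = - c_ t * (1 + (xi^2 + (eta-1)^2 - t^2)/(2*eta))) end.
  { unfold cosh_dist, XP, YP, xi, eta, D, D1, D2. simpl. field.
    repeat split; try lra; nonzero_side HD1 HD2 HK. }
  rewrite HA, HB, HW.
  assert (0 < xi^2 + (eta+1-t)^2) by (assert (0 < (eta+1-t)^2) by (apply pow_lt; lra); nra).
  assert (0 < xi^2 + (eta+1+t)^2) by (assert (0 < (eta+1+t)^2) by (apply pow_lt; lra); nra).
  assert (0 < v^2) by (apply pow_lt; lra).
  rewrite !ln_div, !ln_mult by (repeat apply Rmult_lt_0_compat; lra).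
  lra.
Qed.

(** * The Hessian *)

Lemma hessian_nondegenerate_of_partials (f fx fy : R -> R -> R) (x0 y0 r hxx hxy hyx hyy : R) :
  0 < r ->
  (forall u v, Rabs (u - x0) < r -> Rabs (v - y0) < r ->
     is_derive (fun a => f a v) u (fx u v) /\ is_derive (fun b => f u b) v (fy u v)) ->
  is_derive (fun a => fx a y0) x0 hxx -> is_derive (fun b => fx x0 b) y0 hxy ->
  is_derive (fun a => fy a y0) x0 hyx -> is_derive (fun b => fy x0 b) y0 hyy ->
  hxx * hyy - hxy * hyx <> 0 ->
  hessian_nondegenerate f x0 y0.
Proof.
  intros Hr Hf Hxx Hxy Hyx Hyy Hdet.
  assert (Hnear : forall (g : R -> R -> Prop),
            (forall a b, Rabs (a - x0) < r -> Rabs (b - y0) < r -> g a b) ->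
            locally x0 (fun a => g a y0) /\ locally y0 (fun b => g x0 b)).
  { intros g Hg. assert (Hc : forall c, Rabs (c - c) < r)
      by (intro c; rewrite Rminus_eq_0, Rabs_R0; exact Hr).
    split; exists (mkposreal r Hr); intros c Hc'; apply Hg; auto. }
  destruct (Hnear (fun a b => fx a b = dx f a b)) as [Ex1 Ex2].
  { intros a b Ha Hb. symmetry. apply is_derive_unique, Hf; assumption. }
  destruct (Hnear (fun a b => fy a b = dy f a b)) as [Ey1 Ey2].
  { intros a b Ha Hb. symmetry. apply is_derive_unique, Hf; assumption. }
  pose proof (is_derive_ext_loc _ _ _ _ Ex1 Hxx) as Sxx.
  pose proof (is_derive_ext_loc _ _ _ _ Ex2 Hxy) as Sxy.
  pose proof (is_derive_ext_loc _ _ _ _ Ey1 Hyx) as Syx.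
  pose proof (is_derive_ext_loc _ _ _ _ Ey2 Hyy) as Syy.
  repeat split.
  - exists r. split; [exact Hr|]. intros u v Hu Hv.
    destruct (Hf u v Hu Hv) as [Hu' Hv']. split; eexists; eassumption.
  - eexists; exact Sxx.
  - eexists; exact Sxy.
  - eexists; exact Syx.
  - eexists; exact Syy.
  - replace (Derive (fun a => dx f a y0) x0) with hxx by (symmetry; exact (is_derive_unique _ _ _ Sxx)).
    replace (Derive (fun b => dx f x0 b) y0) with hxy by (symmetry; exact (is_derive_unique _ _ _ Sxy)).
    replace (Derive (fun a => dy f a y0) x0) with hyx by (symmetry; exact (is_derive_unique _ _ _ Syx)).
    replace (Derive (fun b => dy f x0 b) y0) with hyy by (symmetry; exact (is_derive_unique _ _ _ Syy)).
    exact Hdet.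
Qed.

(* The second derivatives of [logK_reduced t] at (0, 1); the Hessian of Re Phi_t along
   Sigma_{t,theta} at w = z0 is diag(hess_xi, hess_eta) / y0^2 conjugated by the rotation of
   angle 2 phi. *)
Definition hess_xi (t : R) : R := 8*t/(4-t^2)^2 - c_ t.
Definition hess_eta (t : R) : R := -8*t/(4-t^2)^2 - c_ t*(1-t^2).
Definition cos2phi (th : R) : R := (cphi th^2 - sphi th^2)/(cphi th^2 + sphi th^2).
Definition sin2phi (th : R) : R := 2*cphi th*sphi th/(cphi th^2 + sphi th^2).

Section HorocycleCoordinates.
Variables (t th x0 y0 : R).
Hypotheses (Ht : 0 < t < 1) (Hy0 : 0 < y0).
Local Notation Cc := (cphi th).
Local Notation Ss := (sphi th).
Local Notation A1 := (kre th (1+t)).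
Local Notation A2 := (kim th (1+t)).
Local Notation B1 := (kre th (1-t)).
Local Notation B2 := (kim th (1-t)).

Definition sqnorm_a u v := (x0 - u - v*B1)^2 + (y0 + v*B2)^2.
Definition sqnorm_b u v := (x0 - u - v*A1)^2 + (y0 + v*A2)^2.
Definition cosh_dist_m1 u v := ((x0-u)^2 + y0^2)/(2*y0*v) - 1 + v/(2*y0)
  - t^2*(Ss^2*((x0-u)^2+y0^2)/v + 2*Ss*Cc*(x0-u) + Cc^2*v)/(2*(Cc^2+Ss^2)*y0).
Definition RePhi_uv u v := (ln (sqnorm_a u v) - ln (sqnorm_b u v))/2 - c_ t * (1 + cosh_dist_m1 u v).

Lemma RePhi_horo_uv u v : 0 < v ->
  Re (Phi t (x0, y0) (horo (RtoC 0 - Ci * RtoC t)%C (u, v) th)) = RePhi_uv u v.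
Proof.
  intros Hv. rewrite horo_imag_time by lra.
  unfold Re, Phi, log_branch, RePhi_uv, sqnorm_a, sqnorm_b, cosh_dist_m1. cbn [fst snd].
  match goal with |- context [ln ?A - ln ?B] =>
    replace A with ((x0 - u - v*B1)^2 + (y0 + v*B2)^2) by (unfold ZtP, XP, YP; simpl; field);
    replace B with ((x0 - u - v*A1)^2 + (y0 + v*A2)^2) by (unfold ZP, XP, YP; simpl; field) end.
  match goal with |- context [fst (RtoC (- c_ t) * ?W)%C] =>
    replace (fst (RtoC (- c_ t) * W)%C) with (- c_ t * fst W) by (simpl; ring) end.
  pose proof (kden_pos th (1+t) ltac:(lra)) as HD1. pose proof (kden_pos th (1-t) ltac:(lra)) as HD2.
  pose proof (cphi_sphi th) as HCS. unfold kden in HD1, HD2.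
  assert (HK : y0 * (v * ((1 + t) * (Cc * Cc + Ss * Ss)) * (Cc * Cc + Ss * Ss * ((1 - t) * (1 - t))) +
     v * ((1 - t) * (Cc * Cc + Ss * Ss)) * (Cc * Cc + Ss * Ss * ((1 + t) * (1 + t)))) <> 0).
  { apply Rmult_integral_contrapositive_currified; [lra|]. rewrite HCS. apply Rgt_not_eq.
    assert (0 < v * ((1 + t) * 1) * (Cc * Cc + Ss * Ss * ((1 - t) * (1 - t))))
      by (repeat apply Rmult_lt_0_compat; lra).
    assert (0 < v * ((1 - t) * 1) * (Cc * Cc + Ss * Ss * ((1 + t) * (1 + t))))
      by (repeat apply Rmult_lt_0_compat; lra).
    lra. }
  match goal with |- context [- c_ t * fst ?W] => replace (fst W) with (1 + cosh_dist_m1 u v) end.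
  { unfold cosh_dist_m1. ring. }
  unfold cosh_dist, XP, YP, cosh_dist_m1, kre, kim, kden. simpl.
  field. repeat split; try lra; apply sumsq_neq0; auto.
Qed.

Definition RePhi_uv_x u v := -(x0 - u - v*B1)/sqnorm_a u v + (x0 - u - v*A1)/sqnorm_b u v
  - c_ t * (-(x0-u)/(y0*v) + t^2*(Ss^2*(x0-u) + Ss*Cc*v)/((Cc^2+Ss^2)*y0*v)).
Definition RePhi_uv_y u v := ((x0-u-v*B1)*(-B1) + (y0+v*B2)*B2)/sqnorm_a u v
  - ((x0-u-v*A1)*(-A1) + (y0+v*A2)*A2)/sqnorm_b u v
  - c_ t * (-((x0-u)^2+y0^2)/(2*y0*v^2) + 1/(2*y0)
            - t^2*(-Ss^2*((x0-u)^2+y0^2)/v^2 + Cc^2)/(2*(Cc^2+Ss^2)*y0)).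

Lemma sqnorm_a_pos u v : 0 < v -> 0 < sqnorm_a u v.
Proof.
  intros Hv. unfold sqnorm_a. pose proof (kim_pos th (1-t) ltac:(lra)).
  assert (0 < (y0 + v*B2)^2) by (apply pow_lt; nra). assert (0 <= (x0 - u - v*B1)^2) by apply pow2_ge_0. lra.
Qed.

Lemma sqnorm_b_pos u v : 0 < v -> 0 < sqnorm_b u v.
Proof.
  intros Hv. unfold sqnorm_b. pose proof (kim_pos th (1+t) ltac:(lra)).
  assert (0 < (y0 + v*A2)^2) by (apply pow_lt; nra). assert (0 <= (x0 - u - v*A1)^2) by apply pow2_ge_0. lra.
Qed.

Lemma cphi_sphi_pos : 0 < Cc^2 + Ss^2.
Proof. pose proof (cphi_sphi th). simpl. lra. Qed.

Ltac derive_side u v := repeat split; try exact I; try lra; try (apply Rgt_not_eq; lra);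
  try (apply Rgt_not_eq; apply pow_lt; lra);
  try (apply Rgt_not_eq; repeat apply Rmult_lt_0_compat; lra);
  try (apply Rgt_not_eq; unfold Rgt);
  match goal with |- 0 < ?E =>
    first [replace E with (sqnorm_a u v) by (unfold sqnorm_a; ring)
          | replace E with (sqnorm_b u v) by (unfold sqnorm_b; ring)]; assumption
  end.

Lemma is_derive_RePhi_uv_x u v : 0 < v -> is_derive (fun a => RePhi_uv a v) u (RePhi_uv_x u v).
Proof.
  intros Hv. pose proof (sqnorm_a_pos u v Hv). pose proof (sqnorm_b_pos u v Hv). pose proof cphi_sphi_pos.
  unfold RePhi_uv, cosh_dist_m1, RePhi_uv_x, sqnorm_a, sqnorm_b.
  auto_derive; [derive_side u v | field; derive_side u v].
Qed.

Lemma is_derive_RePhi_uv_y u v : 0 < v -> is_derive (fun b => RePhi_uv u b) v (RePhi_uv_y u v).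
Proof.
  intros Hv. pose proof (sqnorm_a_pos u v Hv). pose proof (sqnorm_b_pos u v Hv). pose proof cphi_sphi_pos.
  unfold RePhi_uv, cosh_dist_m1, RePhi_uv_y, sqnorm_a, sqnorm_b.
  auto_derive; [derive_side u v | field; derive_side u v].
Qed.

Definition hess_xx := (hess_xi t * cos2phi th^2 + hess_eta t * sin2phi th^2)/y0^2.
Definition hess_yy := (hess_xi t * sin2phi th^2 + hess_eta t * cos2phi th^2)/y0^2.
Definition hess_xy := (hess_xi t - hess_eta t) * cos2phi th * sin2phi th/y0^2.

Ltac hessian_side :=
  let HD1 := fresh in let HD2 := fresh in let HCS := fresh in
  pose proof (kden_pos th (1+t) ltac:(lra)) as HD1; pose proof (kden_pos th (1-t) ltac:(lra)) as HD2;
  pose proof (cphi_sphi th) as HCS; unfold kden in HD1, HD2;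
  assert (0 < 4 - t^2) by nra;
  assert (0 < 4*t - t^3) by (replace (4*t - t^3) with (t*(4-t^2)) by ring; apply Rmult_lt_0_compat; lra);
  pose proof cphi_sphi_pos;
  repeat split; try (apply Rgt_not_eq; lra); try lra;
  apply sumsq_neq0_r; rewrite HCS; apply Rgt_not_eq; apply Rplus_lt_0_compat; apply Rmult_lt_0_compat; lra.

Lemma is_derive_RePhi_uv_xx : is_derive (fun a => RePhi_uv_x a y0) x0 hess_xx.
Proof.
  pose proof (sqnorm_a_pos x0 y0 Hy0). pose proof (sqnorm_b_pos x0 y0 Hy0). pose proof cphi_sphi_pos.
  unfold RePhi_uv_x, sqnorm_a, sqnorm_b. auto_derive; [derive_side x0 y0|].
  replace (x0 - x0) with 0 by ring.
  unfold hess_xx, cos2phi, sin2phi, hess_xi, hess_eta, kre, kim, kden, c_. field. hessian_side.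
Qed.

Lemma is_derive_RePhi_uv_xy : is_derive (fun b => RePhi_uv_x x0 b) y0 hess_xy.
Proof.
  pose proof (sqnorm_a_pos x0 y0 Hy0). pose proof (sqnorm_b_pos x0 y0 Hy0). pose proof cphi_sphi_pos.
  unfold RePhi_uv_x, sqnorm_a, sqnorm_b. auto_derive; [derive_side x0 y0|].
  replace (x0 - x0) with 0 by ring.
  unfold hess_xy, cos2phi, sin2phi, hess_xi, hess_eta, kre, kim, kden, c_. field. hessian_side.
Qed.

Lemma is_derive_RePhi_uv_yx : is_derive (fun a => RePhi_uv_y a y0) x0 hess_xy.
Proof.
  pose proof (sqnorm_a_pos x0 y0 Hy0). pose proof (sqnorm_b_pos x0 y0 Hy0). pose proof cphi_sphi_pos.
  unfold RePhi_uv_y, sqnorm_a, sqnorm_b. auto_derive; [derive_side x0 y0|].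
  replace (x0 - x0) with 0 by ring.
  unfold hess_xy, cos2phi, sin2phi, hess_xi, hess_eta, kre, kim, kden, c_. field. hessian_side.
Qed.

Lemma is_derive_RePhi_uv_yy : is_derive (fun b => RePhi_uv_y x0 b) y0 hess_yy.
Proof.
  pose proof (sqnorm_a_pos x0 y0 Hy0). pose proof (sqnorm_b_pos x0 y0 Hy0). pose proof cphi_sphi_pos.
  unfold RePhi_uv_y, sqnorm_a, sqnorm_b. auto_derive; [derive_side x0 y0|].
  replace (x0 - x0) with 0 by ring.
  unfold hess_yy, cos2phi, sin2phi, hess_xi, hess_eta, kre, kim, kden, c_. field. hessian_side.
Qed.
End HorocycleCoordinates.

Lemma hess_xi_neg t : 0 < t < 1 -> hess_xi t < 0.
Proof.
  intros Ht. unfold hess_xi, c_.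
  replace (8 * t / (4 - t ^ 2) ^ 2 - 4 / (4 * t - t ^ 3)) with (-((16 - 12*t^2)/(t*(4-t^2)^2)))
    by (field; repeat split; nra).
  assert (0 < (16 - 12*t^2)/(t*(4-t^2)^2)).
  { apply Rdiv_lt_0_compat; [nra|]. apply Rmult_lt_0_compat; [lra | apply pow_lt; nra]. }
  lra.
Qed.

Lemma hess_eta_neg t : 0 < t < 1 -> hess_eta t < 0.
Proof.
  intros Ht. unfold hess_eta, c_.
  assert (0 < 8*t/(4-t^2)^2) by (apply Rdiv_lt_0_compat; [lra | apply pow_lt; nra]).
  assert (0 < 4/(4*t - t^3)) by (apply Rdiv_lt_0_compat; nra).
  assert (0 < 4/(4*t - t^3)*(1-t^2)) by (apply Rmult_lt_0_compat; nra).
  lra.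
Qed.

Lemma hess_det t th y0 : 0 < t < 1 -> 0 < y0 ->
  hess_xx t th y0 * hess_yy t th y0 - hess_xy t th y0 * hess_xy t th y0 = hess_xi t * hess_eta t / y0^4.
Proof.
  intros Ht Hy. pose proof (cphi_sphi_pos th).
  unfold hess_xx, hess_yy, hess_xy, cos2phi, sin2phi. field. split; lra.
Qed.

Lemma hessian_nondegenerate_RePhi t th x0 y0 : 0 < t < 1 -> 0 < y0 ->
  hessian_nondegenerate
    (fun x y => Re (Phi t (x0, y0) (horo (RtoC 0 - Ci * RtoC t)%C (x, y) th))) x0 y0.
Proof.
  intros Ht Hy.
  apply (hessian_nondegenerate_of_partials _ (RePhi_uv_x t th x0 y0) (RePhi_uv_y t th x0 y0) x0 y0 (y0/2)
           (hess_xx t th y0) (hess_xy t th y0) (hess_xy t th y0) (hess_yy t th y0)).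
  - lra.
  - intros u v _ Hv. assert (Hv0 : 0 < v) by (apply Rabs_def2 in Hv; lra). split.
    + apply (is_derive_ext (fun a => RePhi_uv t th x0 y0 a v)).
      { intro a. symmetry. apply RePhi_horo_uv; assumption. }
      apply is_derive_RePhi_uv_x; assumption.
    + apply (is_derive_ext_loc (fun b => RePhi_uv t th x0 y0 u b)).
      { apply (filter_imp (fun b => 0 < b)); [|exact (open_gt 0 v Hv0)].
        intros b Hb. symmetry. apply RePhi_horo_uv; assumption. }
      apply is_derive_RePhi_uv_y; assumption.
  - apply is_derive_RePhi_uv_xx; assumption.
  - apply is_derive_RePhi_uv_xy; assumption.
  - apply is_derive_RePhi_uv_yx; assumption.
  - apply is_derive_RePhi_uv_yy; assumption.
  - rewrite hess_det by assumption.
    pose proof (hess_xi_neg t Ht). pose proof (hess_eta_neg t Ht).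
    apply Rgt_not_eq, Rdiv_lt_0_compat; [nra | apply pow_lt; lra].
Qed.

Lemma Cmod_Cexp u : Cmod (Cexp u) = exp (Re u).
Proof.
  unfold Cmod, Cexp. cbn [fst snd].
  replace ((exp (Re u) * cos (Im u)) ^ 2 + (exp (Re u) * sin (Im u)) ^ 2) with ((exp (Re u))²).
  - apply sqrt_Rsqr, Rlt_le, exp_pos.
  - pose proof (sin2_cos2 (Im u)). unfold Rsqr in *. nra.
Qed.

Lemma Cmod_Kt_horo_le t th (z w : C) : 0 < t < 1 -> 0 < snd z -> 0 < snd w ->
  Cmod (Kt t z (horo (RtoC 0 - Ci * RtoC t)%C w th))
  <= Cmod (Kt t z (horo (RtoC 0 - Ci * RtoC t)%C z th)).
Proof.
  intros Ht Hz Hw.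
  destruct (horo_signs t w z th ltac:(lra) Hz Hw) as [Ha [Hb _]].
  destruct (horo_signs t z z th ltac:(lra) Hz Hz) as [Ha' [Hb' _]].
  rewrite <- (Cexp_Phi t z _ Ha Hb), <- (Cexp_Phi t z _ Ha' Hb'), !Cmod_Cexp.
  rewrite !RePhi_horo by assumption.
  destruct (frame_self th z Hz) as [-> ->].
  pose proof (logK_reduced_le_origin t (frame_xi th z w) (frame_eta th z w) Ht (frame_eta_pos th z w Hz Hw))
    as [Hlt | ->].
  - apply Rlt_le, exp_increasing. lra.
  - lra.
Qed.

Theorem lemma1 (t : R) (ht : 0 < t < 1) :
  exists Phi : C -> C * C -> C,
    (* (1) continuous single-valued branch of log K_t on H x G_1 *)
    (forall z P, inH z -> G1 P ->
       Cexp (Phi z P) = Kt t z P /\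
       filterlim (fun q : C * (C * C) => Phi (fst q) (snd q))
         (within (fun q : C * (C * C) => inH (fst q) /\ G1 (snd q)) (locally (z, P)))
         (locally (Phi z P))) /\
    (* (2) max over Sigma_{t,theta} of |K_t(z,.)| attained at h_{-it}(z,theta) *)
    (forall (z : C) (theta : R), inH z ->
       forall P, Sigma t theta P ->
         Cmod (Kt t z P) <= Cmod (Kt t z (horo (RtoC 0 - Ci * RtoC t)%C z theta))) /\
    (* (3) non-degenerate Hessian of (x,y) |-> Re Phi_t(z0, h_{-it}(x+iy,theta)) at z0 *)
    (forall (z0 : C) (theta : R), inH z0 ->
       hessian_nondegenerate
         (fun x y => Re (Phi z0 (horo (RtoC 0 - Ci * RtoC t)%C (x, y) theta)))
         (Re z0) (Im z0)).
Proof.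
  exists (Phi t). split; [|split].
  - intros z P Hz [s [w [th [Hs [Hw ->]]]]].
    destruct (horo_signs s w z th Hs Hz Hw) as [Ha [Hb HY]].
    split; [exact (Cexp_Phi t z _ Ha Hb)|].
    eapply filterlim_filter_le_1; [apply filter_le_within|].
    exact (continuous_Phi (z, horo (RtoC 0 - Ci * RtoC s)%C w th) t
             (Rgt_not_eq _ _ Hz) (Rgt_not_eq _ _ HY) Ha Hb).
  - intros z th Hz P [w [Hw ->]]. exact (Cmod_Kt_horo_le t th z w ht Hz Hw).
  - intros [x0 y0] th Hz. exact (hessian_nondegenerate_RePhi t th x0 y0 ht Hz).
Qed.
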